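(* Let $G$ be a finite simple graph on a vertex set $V$ with $|V|=n\ge2$, and let $k\ge1$. Let $\mathscr A=\{I(K_n\setminus e)\}^{*\infty}\cup\{I(K_n)\}$ (graphs on $V$), and let $\mathscr W_k=\mathscr A+\dots+\mathscr A+\{I(K_n)\}$ with $k-1$ summands $\mathscr A$ (so $\mathscr W_1=\{I(K_n)\}$). Then $G$ has a proper edge colouring with $k$ colours if and only if there exists $H\in\{I(G)\}*\mathscr W_k$ such that for every $a\in\{1,\dots,k\}$ every element of $s(\{I(U_a(H))\}*\{I(K_{1,n-1})\})$ is at most $1$.
   Context: Take $R=\mathbb{Z}$ (or $\mathbb R$). An $R$-weighted complete graph $K$ is a finite vertex set with a weight $v_K(e)\in R$ on every 2-subset $e$. For such $H,G'$ with equal vertex counts and a bijection $f:V(H)\to V(G')$, $H*_fG'$ has vertex set $V(H)$ and weights $v_H(\{x,y\})v_{G'}(\{f(x),f(y)\})$; $H*G'=\{H*_fG': f \text{ bijection}\}$, and for sets $\mathscr H*\mathscr G=\bigcup_{H\in\mathscr H,G'\in\mathscr G}H*G'$. $s(K)=\sum_e v_K(e)$, $s(\mathscr K)=\{s(K):K\in\mathscr K\}$. For weighted complete graphs $H_1,H_2$ on the same vertex set, $H_1+H_2$ has weights $v_{H_1}+v_{H_2}$; for sets on a common vertex set, $\mathscr H_1+\mathscr H_2=\{H_1+H_2\}$. For a set $\mathscr X$, $\mathscr X^{*1}=\mathscr X$, $\mathscr X^{*(m+1)}=\mathscr X^{*m}*\mathscr X$; if there is $N$ with $\mathscr X^{*m}=\mathscr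 X^{*N}$ for all $m\ge N$, then $\mathscr X^{*\infty}:=\mathscr X^{*N}$ (this exists for $\mathscr X=\{I(K_n\setminus e)\}$). $K_n\setminus e$ is the complete graph on $V$ with one edge removed. For a simple graph $G$, $I(G)$ has weight $1$ on edges and $0$ on non-edges. For $a\in R$ and a weighted complete graph $H$, $U_a(H)$ is the unweighted graph on $V(H)$ whose edges are the pairs $e$ with $v_H(e)=a$. *)

From HB Require Import structures.
From mathcomp Require Import all_boot all_order all_algebra all_fingroup.
Set Implicit Arguments. Unset Strict Implicit. Unset Printing Implicit Defensive.
Import Order.TTheory GRing.Theory Num.Theory.
Local Open Scope ring_scope.

Section WG.
Variable T : finType.

(* A weighted complete graph on vertex set T: a weight on every 2-subset of T.
   Canonical representation: value 0 on subsets that are not 2-subsets. *)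
Definition wgraph := {ffun {set T} -> int}.

Definition two (e : {set T}) : bool := #|e| == 2%N.

Definition wset := wgraph -> Prop.

Definition wseteq (S1 S2 : wset) : Prop := forall K, S1 K <-> S2 K.

Definition wsingle (K : wgraph) : wset := fun H => H = K.

Definition wprod (f : {perm T}) (H G : wgraph) : wgraph :=
  [ffun e => if two e then H e * G (f @: e) else 0].

Definition wsprod (S1 S2 : wset) : wset :=
  fun K => exists H G f, [/\ S1 H, S2 G & K = wprod f H G].

Definition wadd (H1 H2 : wgraph) : wgraph :=
  [ffun e => if two e then H1 e + H2 e else 0].

Definition wsadd (S1 S2 : wset) : wset :=
  fun K => exists H1 H2, [/\ S1 H1, S2 H2 & K = wadd H1 H2].

Definition wsunion (S1 S2 : wset) : wset := fun K => S1 K \/ S2 K.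

Definition wsum (K : wgraph) : int := \sum_(e : {set T} | two e) K e.

(* X^{* (m.+1)} *)
Fixpoint wpow_aux (X : wset) (m : nat) : wset :=
  match m with
  | 0 => X
  | m'.+1 => wsprod (wpow_aux X m') X
  end.

Definition wpow (X : wset) (m : nat) : wset := wpow_aux X m.-1.

Definition wstable (X : wset) (N : nat) : Prop :=
  (1 <= N)%N /\ forall m, (N <= m)%N -> wseteq (wpow X m) (wpow X N).

(* X^{*oo} := X^{*N} for any N at which the powers stabilise
   (all such N give the same set; empty if no such N exists). *)
Definition wpowinf (X : wset) : wset :=
  fun K => exists N, wstable X N /\ wpow X N K.

Definition simple_graph (E : {set {set T}}) : Prop := forall e, e \in E -> two e.

Definition Ig (E : {set {set T}}) : wgraph :=
  [ffun e => if two e && (e \in E) then 1 else 0].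

Definition Kn : {set {set T}} := [set e | two e].

Definition Kn_minus (e0 : {set T}) : {set {set T}} := [set e | two e & e != e0].

Definition star (c : T) : {set {set T}} := [set e | two e & c \in e].

Definition U (a : int) (H : wgraph) : {set {set T}} := [set e | two e & H e == a].

Definition Aset (e0 : {set T}) : wset :=
  wsunion (wpowinf (wsingle (Ig (Kn_minus e0)))) (wsingle (Ig Kn)).

(* W_{m.+1} = A + ... + A + {I(K_n)} with m summands A *)
Fixpoint W_aux (e0 : {set T}) (m : nat) : wset :=
  match m with
  | 0 => wsingle (Ig Kn)
  | m'.+1 => wsadd (Aset e0) (W_aux e0 m')
  end.

Definition W (e0 : {set T}) (k : nat) : wset := W_aux e0 k.-1.

Definition proper_edge_colouring (E : {set {set T}}) (k : nat) : Prop :=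
  exists c : {set T} -> 'I_k,
    forall e1 e2, e1 \in E -> e2 \in E -> e1 != e2 ->
      ~~ [disjoint e1 & e2] -> c e1 != c e2.

End WG.

From mathcomp Require Import all_boot all_order all_algebra all_fingroup.
From mathcomp Require Import zify.
Set Implicit Arguments. Unset Strict Implicit. Unset Printing Implicit Defensive.
Import Order.TTheory GRing.Theory Num.Theory.
Local Open Scope ring_scope.

(* Powers of I(K_n \ e0) are exactly the graphs I(K_n \ S) with e0 in S, so
   a member of W_k is, on every pair, an integer between 1 and k, and any
   such layered graph 1 + min(col, k-1) with col e0 = 0 lies in W_k.  Thus the
   graphs H of I(G) * W_k are the graphs carrying a k-colouring on the edges
   of G, with U_a(H) the class of colour a.  Finally, I(U_a H) *_f I(K_{1,n-1})
   counts the edges of U_a(H) through the vertex f^-1(c), and every vertex is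
   of that form, so the sum condition says that each colour class is a
   matching. *)

Section WeightedGraphs.
Variable T : finType.
Implicit Types (e : {set T}) (A B E S M : {set {set T}}) (f : {perm T}).

Lemma two_imset_perm f e : two (f @: e) = two e.
Proof. by rewrite /two card_imset //; apply: perm_inj. Qed.

Lemma imset_perm1 e : (1%g : {perm T}) @: e = e.
Proof. by rewrite (eq_imset _ (@perm1 _)) imset_id. Qed.

Lemma imset_permK f e : f^-1%g @: (f @: e) = e.
Proof. by rewrite -imset_comp (eq_imset _ (permK f)) imset_id. Qed.

Lemma eq_imset_perm f e e' : (f @: e == e') = (e == f^-1%g @: e').
Proof. by rewrite -(inj_eq (imset_inj (@perm_inj _ f^-1%g))) imset_permK. Qed.

Lemma mem_imset_perm f e x : (x \in f @: e) = (f^-1%g x \in e).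
Proof. by rewrite -{1}(permKV f x) mem_imset //; apply: perm_inj. Qed.

Lemma two_perm_transitive e e' : two e -> two e' -> exists f, f @: e = e'.
Proof.
move=> /cards2P [x [y [xy ->]]] /cards2P [u [v [uv ->]]].
pose g := tperm x u; pose h := tperm (g y) v.
have gyu : g y != u by rewrite -[u](tpermL x u) (inj_eq (@perm_inj _ g)) eq_sym.
exists (g * h)%g.
by rewrite imsetU1 imset_set1 !permM /g tpermL -/g /h tpermL tpermD // eq_sym.
Qed.

Lemma IgE A e : Ig A e = if two e && (e \in A) then 1 else 0.
Proof. by rewrite ffunE. Qed.

Lemma wprodE f (H G : wgraph T) e : two e -> wprod f H G e = H e * G (f @: e).
Proof. by move=> te; rewrite ffunE te. Qed.

Lemma wprod_Ig f A B : wprod f (Ig A) (Ig B) = Ig [set e in A | f @: e \in B].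
Proof.
apply/ffunP => e; rewrite ffunE !IgE inE two_imset_perm.
by case: (two e) (e \in A) (f @: e \in B) => [] [] [].
Qed.

Lemma wsum_Ig A : wsum (Ig A) = #|[set e in A | two e]|%:Z.
Proof.
rewrite /wsum (eq_bigr (fun e => if e \in A then 1 else 0)); last first.
  by move=> e te; rewrite IgE te.
rewrite -big_mkcondr sumr_const natz; congr Posz.
by apply: eq_card => e; rewrite !inE andbC.
Qed.

Definition matching M : Prop :=
  {in M &, forall e1 e2, e1 != e2 -> [disjoint e1 & e2]}.

Lemma matching_card M : matching M <-> forall v, (#|[set e in M | v \in e]| <= 1)%N.
Proof.
split=> [match_M v | le1 e1 e2 e1M e2M].
  apply/card_le1_eqP => e1 e2; rewrite !inE => /andP [e1M ve1] /andP [e2M ve2].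
  apply/eqP; apply: contraT; rewrite eq_sym => /(match_M _ _ e1M e2M).
  by move=> /pred0P /(_ v); rewrite /= ve1 ve2.
apply: contraR => /pred0Pn [v /andP [ve1 ve2]]; apply/eqP.
by apply: (elimT card_le1_eqP (le1 v)); rewrite inE ?e1M ?e2M.
Qed.

Lemma wsum_star_product f M c : simple_graph M ->
  wsum (wprod f (Ig M) (Ig (star c))) = #|[set e in M | f^-1%g c \in e]|%:Z.
Proof.
move=> simM; rewrite wprod_Ig wsum_Ig; congr Posz; apply: eq_card => e.
rewrite !inE two_imset_perm mem_imset_perm.
by case eM: (e \in M) => //=; rewrite (simM e eM) andbT.
Qed.

Lemma star_sums_le1P M c : simple_graph M ->
  (forall x, wsprod (wsingle (Ig M)) (wsingle (Ig (star c))) x -> wsum x <= 1)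
  <-> matching M.
Proof.
move=> simM; rewrite matching_card.
split=> [le1 v | le1 _ [_ [_ [f [-> -> ->]]]]]; last first.
  by rewrite wsum_star_product // lez_nat.
have := le1 (wprod (tperm v c) (Ig M) (Ig (star c))).
rewrite wsum_star_product // tpermV tpermR lez_nat; apply.
by exists (Ig M), (Ig (star c)), (tperm v c).
Qed.

Lemma U_simple (a : int) (H : wgraph T) : simple_graph (U a H).
Proof. by move=> e; rewrite inE => /andP []. Qed.

Lemma proper_edge_colouringP E k : proper_edge_colouring E k <->
  exists col : {set T} -> 'I_k, forall a, matching [set e in E | col e == a].
Proof.
split=> -[col proper_col]; exists col.
  move=> a e1 e2; rewrite !inE => /andP [e1E /eqP e1a] /andP [e2E /eqP e2a] ne.
  apply: contraT => /(proper_col _ _ e1E e2E ne).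
  by rewrite e1a e2a eqxx.
move=> e1 e2 e1E e2E ne; apply: contra => /eqP same_col.
by apply: (proper_col (col e1)); rewrite // inE ?e1E ?e2E -?same_col eqxx.
Qed.

Lemma matching_relabel n E (col : {set T} -> 'I_n) (s : {perm 'I_n}) :
  (forall a, matching [set e in E | col e == a]) ->
  forall a, matching [set e in E | s (col e) == a].
Proof.
move=> match_col a; have -> : [set e in E | s (col e) == a]
    = [set e in E | col e == s^-1%g a].
  by apply/setP => e; rewrite !inE -(inj_eq (@perm_inj _ s^-1%g)) permK.
exact: match_col.
Qed.

Lemma U_colour_graph n E (col : {set T} -> 'I_n) (H : wgraph T) : simple_graph E ->
  (forall e, two e -> H e = if e \in E then (col e).+1%:Z else 0) ->
  forall a : 'I_n, U a.+1%:Z H = [set e in E | col e == a].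
Proof.
move=> simE HE a; apply/setP => e; rewrite !inE.
case te: (two e); last by case eE: (e \in E); rewrite // (simE e eE) in te.
by rewrite HE //; case: (e \in E); rewrite // eqz_nat eqSS.
Qed.

Lemma Kn_minusE e0 : Kn_minus e0 = Kn T :\: [set e0].
Proof. by apply/setP => e; rewrite !inE andbC. Qed.

Lemma wprod_Ig_Kn_minus f S e0 :
  wprod f (Ig (Kn T :\: S)) (Ig (Kn_minus e0)) = Ig (Kn T :\: (f^-1%g @: e0 |: S)).
Proof.
rewrite wprod_Ig; congr Ig; apply/setP => e.
rewrite !inE two_imset_perm eq_imset_perm.
by case: (two e) (e \in S) (e == _) => [] [] [].
Qed.

(* Reverse step of the induction on powers: some edge of S other than e0 (or
   e0 itself when S = {e0}) is moved onto e0 by a permutation. *)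
Lemma Kn_minus_peel e0 S m : two e0 -> S \subset Kn T -> e0 \in S ->
    (#|S| <= m.+2)%N ->
  exists f S', [/\ S' \subset Kn T, e0 \in S', (#|S'| <= m.+1)%N
                 & S = f^-1%g @: e0 |: S'].
Proof.
move=> t0 sub inS cS.
case: (set_0Vmem (S :\ e0)) => [S_e0 | [e' /setD1P [ne' e'S]]].
  have S1 : S = [set e0] by rewrite -(setD1K inS) S_e0 setU0.
  have [f fe0] := two_perm_transitive t0 t0.
  exists f, S; split => //; first by rewrite S1 cards1.
  by rewrite S1 -{2}fe0 imset_permK setUid.
have te' : two e' by move/subsetP: sub => /(_ e' e'S); rewrite inE.
have [f fe'] := two_perm_transitive te' t0.
exists f, (S :\ e'); split.
- exact: subset_trans (subsetDl _ _) sub.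
- by rewrite !inE eq_sym ne'.
- by move: cS; rewrite (cardsD1 e' S) e'S.
- by rewrite -fe' imset_permK setD1K.
Qed.

Lemma wpow_aux_Kn_minusP e0 m K : two e0 ->
  wpow_aux (wsingle (Ig (Kn_minus e0))) m K <->
  exists S, [/\ S \subset Kn T, e0 \in S, (#|S| <= m.+1)%N & K = Ig (Kn T :\: S)].
Proof.
move=> t0; elim: m K => [|m IH] K /=.
  split=> [-> | [S [sub inS cS ->]]].
    exists [set e0]; split; rewrite ?sub1set ?inE ?t0 ?cards1 ?Kn_minusE //.
  have /eqP -> : S == [set e0] by rewrite eq_sym eqEcard sub1set inS cards1.
  by rewrite Kn_minusE.
split=> [[_ [_ [f [/IH [S [sub inS cS ->]] -> ->]]]] | [S [sub inS cS ->]]].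
  rewrite wprod_Ig_Kn_minus; exists (f^-1%g @: e0 |: S); split.
  - by rewrite subUset sub1set inE two_imset_perm t0.
  - by rewrite in_setU1 inS orbT.
  - by rewrite cardsU1; case: (_ \in S) cS => /=; lia.
  - by [].
have [f [S' [sub' inS' cS' ->]]] := Kn_minus_peel t0 sub inS cS.
exists (Ig (Kn T :\: S')), (Ig (Kn_minus e0)), f; split => //.
  by apply/IH; exists S'.
by rewrite wprod_Ig_Kn_minus.
Qed.

Lemma wpow_Kn_minus_large e0 m K : two e0 -> (#|Kn T| <= m)%N ->
  wpow (wsingle (Ig (Kn_minus e0))) m K <->
  exists S, [/\ S \subset Kn T, e0 \in S & K = Ig (Kn T :\: S)].
Proof.
move=> t0 large; have m_gt0 : (0 < m)%N.
  by apply: leq_trans large; apply/card_gt0P; exists e0; rewrite inE.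
rewrite /wpow wpow_aux_Kn_minusP // prednK //.
split=> [[S [sub inS _ ->]] | [S [sub inS ->]]]; exists S; split => //.
exact: leq_trans (subset_leq_card sub) large.
Qed.

Lemma wpowinf_Kn_minusP e0 K : two e0 ->
  wpowinf (wsingle (Ig (Kn_minus e0))) K <->
  exists S, [/\ S \subset Kn T, e0 \in S & K = Ig (Kn T :\: S)].
Proof.
move=> t0; split=> [[N [[_ stable] XNK]] | KS].
  apply/(@wpow_Kn_minus_large _ (maxn N #|Kn T|)) => //; first exact: leq_maxr.
  by apply/(stable _ (leq_maxl _ _)).
have Kn_gt0 : (0 < #|Kn T|)%N by apply/card_gt0P; exists e0; rewrite inE.
exists #|Kn T|; split; last exact/wpow_Kn_minus_large.
by split=> // m large K'; rewrite !wpow_Kn_minus_large.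
Qed.

Lemma Aset_Ig e0 K : two e0 -> Aset e0 K -> exists A, K = Ig A.
Proof.
move=> t0 [/(wpowinf_Kn_minusP _ t0) [S [_ _ ->]] | ->].
  by exists (Kn T :\: S).
by exists (Kn T).
Qed.

Lemma W_aux_bounds e0 m K : two e0 -> W_aux e0 m K ->
  forall e, two e -> 1 <= K e <= m.+1%:Z.
Proof.
move=> t0; elim: m K => [|m IH] K /=; first by move=> -> e te; rewrite IgE inE te.
move=> [_ [K' [/(Aset_Ig t0) [A ->] /IH K'_bounds ->]]] e te.
rewrite ffunE te IgE; have := K'_bounds e te.
by case: ifP => _; lia.
Qed.

Definition level_graph (col : {set T} -> nat) (m : nat) : wgraph T :=
  [ffun e => if two e then (minn (col e) m).+1%:Z else 0].

Lemma level_graph_W e0 col m : two e0 -> col e0 = 0%N ->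
  W_aux e0 m (level_graph col m).
Proof.
move=> t0 col_e0; elim: m => [|m IH] /=.
  by apply/ffunP => e; rewrite !ffunE inE minn0; case: (two e).
pose S := [set e in Kn T | (col e <= m)%N].
exists (Ig (Kn T :\: S)), (level_graph col m); split => //.
  left; apply/wpowinf_Kn_minusP => //; exists S; split => //.
    by apply/subsetP => e; rewrite inE => /andP [].
  by rewrite !inE t0 col_e0.
apply/ffunP => e; rewrite !ffunE !inE; case: (two e) => //=.
by case: leqP => h; rewrite ?add0r -?PoszD; congr Posz; lia.
Qed.

End WeightedGraphs.

Theorem mainTheorem9 (T : finType) (E : {set {set T}}) (k : nat)
  (e0 : {set T}) (c : T) :
  simple_graph E -> (2 <= #|T|)%N -> (1 <= k)%N -> two e0 ->
  (proper_edge_colouring E k <->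
   exists H, wsprod (wsingle (Ig E)) (W e0 k) H /\
     forall a : nat, (1 <= a <= k)%N ->
       forall x, wsprod (wsingle (Ig (U a%:Z H))) (wsingle (Ig (star c))) x ->
         wsum x <= 1).
Proof.
move=> simE _; case: k => [//|k] _ t0; rewrite proper_edge_colouringP; split.
- case=> col0 /(matching_relabel (s := tperm (col0 e0) ord0)) match_col.
  pose col e := tperm (col0 e0) ord0 (col0 e).
  pose H := wprod 1 (Ig E) (level_graph (fun e => val (col e)) k).
  have HE e : two e -> H e = if e \in E then (col e).+1%:Z else 0.
    move=> te; rewrite wprodE // imset_perm1 IgE te !ffunE te.
    by case: (e \in E); rewrite /= ?mul0r // mul1r (minn_idPl _) // -ltnS.
  exists H; split.
    exists (Ig E), (level_graph (fun e => val (col e)) k), 1%g; split => //.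
    by apply: level_graph_W => //; rewrite /col tpermL.
  case=> [//|a] /= a_le; apply/star_sums_le1P; first exact: U_simple.
  by rewrite (U_colour_graph simE HE (Ordinal a_le)); apply: match_col.
- case=> _ [[_ [Wk [f [-> WkW ->]]]] star_le1].
  have Wk_bounds := W_aux_bounds t0 (WkW : W_aux e0 k Wk).
  exists (fun e : {set T} => inord `|Wk (f @: e)|.-1) => a.
  rewrite -(U_colour_graph simE (H := wprod f (Ig E) Wk)); last first.
    move=> e te; rewrite wprodE // IgE te.
    have := Wk_bounds _ (etrans (two_imset_perm f e) te).
    by case: (e \in E) => bounds; rewrite ?mul0r // mul1r inordK; lia.
  by apply/star_sums_le1P; [exact: U_simple | apply: star_le1; rewrite /= ltn_ord].
Qed.
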